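(* Let $\mathcal{X},\mathcal{Y},\mathcal{Z}$ be bounded subsets of a metric space $(\mathcal{S},\eta)$, let $X$ be an uncertain variable with marginal range $[[X]]=\mathcal{X}$, and let $Y=g(X)$ and $Z=h(X)$, where $g:\mathcal{X}\to\mathcal{Y}$ is $L$-invertible and $h:\mathcal{X}\to\mathcal{Z}$ is Lipschitz. Then there exists $L_{Z|Y}\ge0$ such that $\mathcal{H}([[Z|y^1]],[[Z|y^2]])\le L_{Z|Y}\,\eta(y^1,y^2)$ for all $y^1,y^2\in[[Y]]$.
   Context: Uncertain variables: fix a sample space $\Omega$; an uncertain variable with values in a set $\mathcal{X}$ is a map $X:\Omega\to\mathcal{X}$, with marginal range $[[X]]:=\{X(\omega):\omega\in\Omega\}$; for uncertain variables $Z,Y$ and $y\in[[Y]]$, the conditional range is $[[Z|y]]:=\{Z(\omega):\omega\in\Omega,\ Y(\omega)=y\}$. Hausdorff distance: for nonempty $\mathcal{A},\mathcal{B}\subseteq\mathcal{S}$, $\mathcal{H}(\mathcal{A},\mathcal{B}):=\max\{\sup_{a\in\mathcal{A}}\inf_{b\in\mathcal{B}}\eta(a,b),\sup_{b\in\mathcal{B}}\inf_{a\in\mathcal{A}}\eta(a,b)\}$. A function $g:\mathcal{X}\to\mathcal{Y}$ is $L$-invertible if there is $L_{g^{-1}}\ge0$ with $\mathcal{H}(g^{-1}(y^1),g^{-1}(y^2))\le L_{g^{-1}}\eta(y^1,y^2)$ for all $y^1,y^2$ in $g(\mathcal{X})$, where $g^{-1}(y)=\{x\in\mathcal{X}:g(x)=y\}$.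 *)

From HB Require Import structures.
From mathcomp Require Import all_boot all_order all_algebra.
From mathcomp Require Import all_classical all_reals.
Set Implicit Arguments. Unset Strict Implicit. Unset Printing Implicit Defensive.
Import Order.TTheory GRing.Theory Num.Theory.
Local Open Scope classical_set_scope.
Local Open Scope ring_scope.

Definition is_metric {R : realType} {S : Type} (eta : S -> S -> R) : Prop :=
  (forall x y, 0 <= eta x y) /\
  (forall x y, eta x y = 0 <-> x = y) /\
  (forall x y, eta x y = eta y x) /\
  (forall x y z, eta x z <= eta x y + eta y z).

Definition bounded_set {R : realType} {S : Type} (eta : S -> S -> R) (A : set S) : Prop :=
  exists M : R, forall a b, A a -> A b -> eta a b <= M.

(* Hausdorff distance (sup/inf of real sets; meaningful for nonempty bounded sets) *)
Definition hausdorff {R : realType} {S : Type} (eta : S -> S -> R) (A B : set S) : R :=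
  Num.max (sup [set inf [set eta a b | b in B] | a in A])
          (sup [set inf [set eta a b | a in A] | b in B]).

Definition mrange {Omega S : Type} (X : Omega -> S) : set S := [set X w | w in setT].

Definition crange {Omega S T : Type} (Z : Omega -> S) (Y : Omega -> T) (y : T) : set S :=
  [set Z w | w in [set w | Y w = y]].

Definition preim_on {S T : Type} (Xs : set S) (g : S -> T) (y : T) : set S :=
  [set x | Xs x /\ g x = y].

Definition L_invertible {R : realType} {S : Type} (eta : S -> S -> R)
    (Xs : set S) (g : S -> S) : Prop :=
  exists L : R, 0 <= L /\
    forall y1 y2, (g @` Xs) y1 -> (g @` Xs) y2 ->
      hausdorff eta (preim_on Xs g y1) (preim_on Xs g y2) <= L * eta y1 y2.

Definition lipschitz_on {R : realType} {S : Type} (eta : S -> S -> R)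
    (Xs : set S) (h : S -> S) : Prop :=
  exists L : R, 0 <= L /\
    forall x1 x2, Xs x1 -> Xs x2 -> eta (h x1) (h x2) <= L * eta x1 x2.

From HB Require Import structures.
From mathcomp Require Import all_boot all_order all_algebra.
From mathcomp Require Import all_classical all_reals.
Set Implicit Arguments. Unset Strict Implicit. Unset Printing Implicit Defensive.
Import Order.TTheory GRing.Theory Num.Theory.
Local Open Scope classical_set_scope.
Local Open Scope ring_scope.

(* [[Z|y]] is the image under h of the fibre g^{-1}(y) inside [[X]], and a
   K-Lipschitz map scales both one-sided excesses of the Hausdorff distance by
   at most K. Hence H([[Z|y1]], [[Z|y2]]) <= L_h H(g^{-1}(y1), g^{-1}(y2))
   <= L_h L_g eta(y1, y2). *)

Definition hexcess {R : realType} {S : Type} (d : S -> S -> R) (A B : set S) : R :=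
  sup [set inf [set d a b | b in B] | a in A].

Lemma hausdorffE (R : realType) (S : Type) (eta : S -> S -> R) (A B : set S) :
  hausdorff eta A B = Num.max (hexcess eta A B) (hexcess (fun x y => eta y x) B A).
Proof. by []. Qed.

Section HexcessImage.
Variables (R : realType) (S : Type) (d : S -> S -> R) (h : S -> S).
Variables (A B : set S) (K M : R).
Hypotheses (K_gt0 : 0 < K) (A_neq0 : A !=set0) (B_neq0 : B !=set0).
Hypothesis d_ge0 : forall x y, 0 <= d x y.
Hypothesis d_le : forall a b, A a -> B b -> d a b <= M.
Hypothesis h_lip : forall a b, A a -> B b -> d (h a) (h b) <= K * d a b.

Let inf_lbound (x : S) (C : set S) : has_lbound [set d x b | b in C].
Proof. by exists 0 => _ [b _ <-]. Qed.

Lemma inf_image_le a : A a ->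
  inf [set d (h a) c | c in h @` B] <= K * inf [set d a b | b in B].
Proof.
move=> Aa; have [b0 Bb0] := B_neq0.
rewrite -ler_pdivrMl //; apply: lb_le_inf; first by exists (d a b0), b0.
move=> _ [b Bb <-]; rewrite ler_pdivrMl //.
apply: le_trans (h_lip Aa Bb).
by apply: (ge_inf (inf_lbound _ _)); exists (h b) => //; exists b.
Qed.

Lemma hexcess_image_le : hexcess d (h @` A) (h @` B) <= K * hexcess d A B.
Proof.
have [a0 Aa0] := A_neq0; have [b0 Bb0] := B_neq0.
have excess_ub : has_ubound [set inf [set d a b | b in B] | a in A].
  exists M => _ [a Aa <-]; apply: le_trans (d_le Aa Bb0).
  by apply: (ge_inf (inf_lbound _ _)); exists b0.
apply: ge_sup; first by exists (inf [set d (h a0) c | c in h @` B]), (h a0).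
move=> _ [_ [a Aa <-] <-]; apply: le_trans (inf_image_le Aa) _.
by rewrite ler_pM2l //; apply: (ub_le_sup excess_ub); exists a.
Qed.

End HexcessImage.

Lemma hausdorff_image_le (R : realType) (S : Type) (eta : S -> S -> R) (h : S -> S)
    (A B : set S) (K M : R) :
  0 < K -> A !=set0 -> B !=set0 -> (forall x y, 0 <= eta x y) ->
  (forall a b, A a -> B b -> eta a b <= M) ->
  (forall a b, A a -> B b -> eta (h a) (h b) <= K * eta a b) ->
  hausdorff eta (h @` A) (h @` B) <= K * hausdorff eta A B.
Proof.
move=> K_gt0 A_neq0 B_neq0 eta_ge0 eta_le h_lip.
rewrite !hausdorffE (maxr_pMr _ _ (ltW K_gt0)) ge_max; apply/andP; split.
  by rewrite le_max (hexcess_image_le K_gt0 A_neq0 B_neq0 eta_ge0 eta_le h_lip).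
rewrite le_max (hexcess_image_le (d := fun x y => eta y x) (M := M) K_gt0)
  ?orbT //.
- by move=> a b Ba Ab; apply: eta_le.
- by move=> a b Ba Ab; apply: h_lip.
Qed.

Lemma mrange_comp (Omega S T : Type) (X : Omega -> S) (g : S -> T) :
  mrange (g \o X) = g @` mrange X.
Proof. by rewrite /mrange image_comp. Qed.

Lemma crange_comp (Omega S T U : Type) (X : Omega -> S) (g : S -> T) (h : S -> U) (y : T) :
  crange (h \o X) (g \o X) y = h @` preim_on (mrange X) g y.
Proof.
apply/seteqP; split.
  by move=> _ [w /= gXw <-]; exists (X w) => //; split => //; exists w.
by move=> _ [_ [[w _ <-] /= gXw] <-]; exists w.
Qed.

Lemma preim_on_neq0 (S T : Type) (A : set S) (g : S -> T) (y : T) :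
  (g @` A) y -> preim_on A g y !=set0.
Proof. by move=> [x Ax <-]; exists x. Qed.

Theorem lemma6 (R : realType) (S : Type) (eta : S -> S -> R)
  (Xs Ys Zs : set S) (Omega : Type) (X : Omega -> S) (g h : S -> S) :
  is_metric eta ->
  bounded_set eta Xs -> bounded_set eta Ys -> bounded_set eta Zs ->
  mrange X = Xs ->
  (forall x, Xs x -> Ys (g x)) ->
  (forall x, Xs x -> Zs (h x)) ->
  L_invertible eta Xs g ->
  lipschitz_on eta Xs h ->
  exists LZY : R, 0 <= LZY /\
    forall y1 y2, mrange (g \o X) y1 -> mrange (g \o X) y2 ->
      hausdorff eta (crange (h \o X) (g \o X) y1) (crange (h \o X) (g \o X) y2)
        <= LZY * eta y1 y2.
Proof.
move=> [eta_ge0 _] [M Xs_bd] _ _ rangeX _ _ [Lg [Lg_ge0 g_inv]] [Lh [Lh_ge0 h_lip]].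
(* Lh + 1 rather than Lh keeps the scaling constant positive. *)
have K_gt0 : 0 < Lh + 1 by apply: ltr_wpDl.
exists ((Lh + 1) * Lg); split; first by rewrite mulr_ge0 // ltW.
move=> y1 y2; rewrite mrange_comp rangeX => gy1 gy2.
rewrite !crange_comp rangeX -mulrA.
set fibre := preim_on Xs g.
apply: le_trans (_ : _ <= (Lh + 1) * hausdorff eta (fibre y1) (fibre y2)) _.
  apply: (hausdorff_image_le (M := M) K_gt0 _ _ eta_ge0).
  - exact: preim_on_neq0 gy1.
  - exact: preim_on_neq0 gy2.
  - by move=> a b [Xa _] [Xb _]; apply: Xs_bd.
  - move=> a b [Xa _] [Xb _]; apply: le_trans (h_lip _ _ Xa Xb) _.
    by rewrite ler_wpM2r ?lerDl.
by rewrite ler_pM2l // g_inv.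
Qed.
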